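(* Let $K=K_1\times\cdots\times K_n$, where each $K_j\subset\mathbb R$ is a non-polar compact set. For each $j$, let $w_j:K_j\to[0,\infty)$ be bounded and Borel measurable with $S(K_j,w_j)>0$. Let $\widehat{w_j}(x)=\lim_{r\to0^+}\sup_{\xi\in(x-r,x+r)\cap K_j}w_j(\xi)$ and $\widehat w(x_1,\dots,x_n)=\prod_j\widehat{w_j}(x_j)$. For $\alpha(i)=(\alpha_1,\dots,\alpha_n)$, let $T^{(K_j)}_{\alpha_j,\widehat{w_j}}$ be the (unique) monic polynomial of degree $\alpha_j$ minimizing $\|\widehat{w_j}Q\|_{K_j}$ over monic $Q$ of degree $\alpha_j$, with $T^{(K_j)}_{0,\widehat{w_j}}=1$. Then $$Q_{\alpha(i)}(x_1,\dots,x_n)=\prod_{j=1}^nT^{(K_j)}_{\alpha_j,\widehat{w_j}}(x_j)$$ belongs to $\mathcal P(\alpha(i))$ and is a weighted Chebyshev polynomial for $\widehat w$ on $K$, i.e. $\|\widehat wQ_{\alpha(i)}\|_K=\inf\{\|\widehat wP\|_K:P\in\mathcal P(\alpha(i))\}$, the infimum being over complex coefficients.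
   Context: Monomials $x^\alpha=x_1^{\alpha_1}\cdots x_n^{\alpha_n}$, $\alpha\in\mathbb N_0^n$, are enumerated as $e_0=1,e_1,e_2,\dots$ with $e_i=x^{\alpha(i)}$. The enumeration is such that $|\alpha(i)|=\alpha_1+\dots+\alpha_n$ is non-decreasing in $i$. Among multi-indices of equal length it is ordered lexicographically: for $|\alpha|=|\beta|$, $\beta\prec\alpha$ iff for some $l$ one has $\alpha_l<\beta_l$ and $\alpha_k=\beta_k$ for all $k<l$. $\mathcal P(\alpha(i))$ denotes the set of polynomials of the form $e_i+\sum_{j<i}c_je_j$ with $c_j\in\mathbb C$. $\|\cdot\|_K$ is the sup norm on $K$. $S(K_j,w_j)=\exp[\int\log w_j\,d\mu_{K_j}]$, where $\mu_{K_j}$ is the equilibrium measure of $K_j$. *)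

From HB Require Import structures.
From mathcomp Require Import all_boot all_order all_algebra.
From mathcomp Require Import mpoly.
From mathcomp Require Import all_classical all_reals all_analysis.
From mathcomp Require Import complex.
Set Implicit Arguments. Unset Strict Implicit. Unset Printing Implicit Defensive.
Import Order.TTheory GRing.Theory Num.Theory.
Import numFieldNormedType.Exports.
Local Open Scope classical_set_scope.
Local Open Scope ring_scope.

Section PotentialTheory.
Context {R : realType}.

Definition log_kernel (x y : R) : \bar R :=
  if x == y then +oo%E else (- ln `|x - y|)%:E.

Definition prob_on (K : set R) (mu : probability R R) : Prop :=
  mu (~` K) = 0%E.

Definition log_energy (K : set R) (mu : probability R R) : \bar R :=
  (\int[mu]_(x in K) \int[mu]_(y in K) log_kernel x y)%E.

Definition nonpolar (K : set R) : Prop :=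
  exists mu : probability R R, prob_on K mu /\ (log_energy K mu < +oo)%E.

Definition equilibrium_measure (K : set R) (mu : probability R R) : Prop :=
  prob_on K mu /\
  forall nu : probability R R, prob_on K nu -> (log_energy K mu <= log_energy K nu)%E.

(* S(K,w) = exp[ \int log w dmu_K ]  (extended reals; log 0 = -oo) *)
Definition S_weight (K : set R) (w : R -> R) (muK : probability R R) : \bar R :=
  expeR (\int[muK]_(x in K) lne (w x)%:E)%E.

Definition what (K : set R) (w : R -> R) (x : R) : R :=
  let f := fun r : R => sup [set w xi | xi in K `&` `](x - r), (x + r)[%classic] in
  lim (f @ 0^'+).

End PotentialTheory.

Section Chebyshev.
Context {R : realType}.
Local Notation C := (R[i]).
Local Notation normc := (@ComplexField.Normc.normc R).
Local Notation rC x := (real_complex R x).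

Definition wnorm1 (K : set R) (f : R -> R) (p : {poly C}) : R :=
  sup [set f x * normc p.[rC x] | x in K].

Variable n : nat.

Definition Kprod (K : 'I_n -> set R) : set ('I_n -> R) :=
  [set x | forall j, K j (x j)].

Definition wnormn (K : 'I_n -> set R) (W : ('I_n -> R) -> R)
    (P : mpoly.mpoly n C) : R :=
  sup [set W x * normc (mpoly.meval (fun j => rC (x j)) P) | x in Kprod K].

(* the enumeration order on multi-indices: b comes strictly before a *)
Definition mprec (b a : mpoly.multinom n) : bool :=
  (mpoly.mdeg b < mpoly.mdeg a)%N ||
  ((mpoly.mdeg b == mpoly.mdeg a) &&
   [exists l : 'I_n, (tnth (mpoly.multinom_val a) l < tnth (mpoly.multinom_val b) l)%N &&
      [forall k : 'I_n, (k < l)%N ==> (tnth (mpoly.multinom_val a) k == tnth (mpoly.multinom_val b) k)]]).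

(* P(a) : polynomials e_a + sum_{b before a} c_b e_b, c_b complex *)
Definition Pset (a : mpoly.multinom n) : set (mpoly.mpoly n C) :=
  [set P | mpoly.mcoeff a P = 1 /\
     forall b, b != a -> ~~ mprec b a -> mpoly.mcoeff b P = 0].

Definition cheb_product (T : 'I_n -> {poly C}) : mpoly.mpoly n C :=
  \prod_(j < n)
     (map_poly (@mpoly.mpolyC n C) (T j)).[mpoly.mpolyX C (mpoly.mnm1 j)].

End Chebyshev.

(* Each T_j is dual to a functional: Hahn-Banach, applied to the seminorm
   p |-> ||w_j p||_{K_j}, gives a linear form L_j on polynomials of bounded
   degree with |L_j p| <= ||w_j p||_{K_j}, L_j X^k = 0 for k < alpha_j and
   L_j X^alpha_j = ||w_j T_j||_{K_j}.  Applying L_1, ..., L_n to a polynomial P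
   one variable at a time (the remaining variables are still evaluated on K)
   keeps the bound, so |(L_1 (x) ... (x) L_n) P| <= ||w P||_K.  For P in
   P(alpha) every monomial other than x^alpha has some exponent beta_j <
   alpha_j, hence is killed, and the left side is prod_j ||w_j T_j||_{K_j},
   which is also an upper bound for ||w Q_alpha||_K. *)

From HB Require Import structures.
From mathcomp Require Import all_boot all_order all_algebra.
From mathcomp Require Import mpoly.
From mathcomp Require Import all_classical all_reals all_analysis.
From mathcomp Require Import complex.
From mathcomp Require Import ring lra.
Import Order.TTheory GRing.Theory Num.Theory.
Import numFieldNormedType.Exports.
Set Implicit Arguments. Unset Strict Implicit. Unset Printing Implicit Defensive.
Local Open Scope classical_set_scope.
Local Open Scope ring_scope.
Local Open Scope complex_scope.

Local Notation normc := (@ComplexField.Normc.normc _).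
Import ComplexField.Normc (normc0, normc1, normcM, normcV).

Section PolyInVar.
Variables (n : nat) (R : nzRingType).
Implicit Types (p : {poly R}) (j : 'I_n).

Definition poly_in_var (j : 'I_n) (p : {poly R}) : {mpoly R[n]} :=
  (map_poly (@mpolyC n R) p).['X_j].

Lemma poly_in_varE j p :
  poly_in_var j p = \sum_(k < size p) p`_k *: 'X_[U_(j) *+ k].
Proof.
have mpolyC_inj : injective (@mpolyC n R).
  by move=> a b /eqP; rewrite mpolyC_eq => /eqP.
rewrite /poly_in_var horner_coef size_map_inj_poly //; apply: eq_bigr => k _.
by rewrite coef_map /= mpolyXn mul_mpolyC.
Qed.

Lemma mulmn_mnm1_inj (j : 'I_n) : injective (fun k => (U_(j) *+ k)%MM).
Proof. by move=> k l /mnmP /(_ j); rewrite !mulmnE !mnm1E eqxx !mul1n. Qed.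

Lemma msupp_poly_in_var j p m :
  m \in msupp (poly_in_var j p) -> exists2 k, (k < size p)%N & m = (U_(j) *+ k)%MM.
Proof.
rewrite poly_in_varE => /msupp_sum_le /flattenP [s /mapP [k _ ->]] /msuppZ_le.
by rewrite msuppX inE => /eqP ->; exists k.
Qed.

Lemma mcoeff_poly_in_var j p k :
  (k < size p)%N -> (poly_in_var j p)@_(U_(j) *+ k) = p`_k.
Proof.
move=> kp; rewrite poly_in_varE raddf_sum /= (bigD1 (Ordinal kp)) //= big1 ?addr0.
  by rewrite mcoeffZ mcoeffX eqxx mulr1.
move=> i /eqP ne; rewrite mcoeffZ mcoeffX.
by case: eqP => [/mulmn_mnm1_inj ei|]; [case: ne; apply: val_inj | rewrite mulr0].
Qed.

Lemma mlead_poly_in_var j p : p \is monic ->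
  mlead (poly_in_var j p) = (U_(j) *+ (size p).-1)%MM /\
  mleadc (poly_in_var j p) = 1.
Proof.
move=> mp; set F := poly_in_var j p.
have sp : (0 < size p)%N by rewrite lt0n size_poly_eq0 monic_neq0.
have cF : F@_(U_(j) *+ (size p).-1) = 1.
  by rewrite mcoeff_poly_in_var ?prednK // -lead_coefE (monicP mp).
have inF : (U_(j) *+ (size p).-1)%MM \in msupp F by rewrite mcoeff_msupp cF oner_eq0.
have nzF : F != 0 by apply: contraTneq inF => ->; rewrite msupp0.
have [k kp Ek] := msupp_poly_in_var (mlead_supp nzF).
have := lemc_mdeg (msupp_le_mlead inF); rewrite Ek !mdegMn !mdeg1 !mul1n => le_k.
suff -> : k = (size p).-1 by [].
by apply/eqP; rewrite eqn_leq le_k andbT -ltnS prednK.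
Qed.

Lemma meval_poly_in_var (v : 'I_n -> R) j p : meval v (poly_in_var j p) = p.[v j].
Proof.
rewrite poly_in_varE raddf_sum /= horner_coef; apply: eq_bigr => k _.
rewrite mevalZ mevalX (big_only1 j) // ?mulmnE ?mnm1E ?eqxx ?mul1n //.
by move=> i ne _; rewrite mulmnE mnm1E eq_sym (negbTE ne) mul0n expr0.
Qed.

Lemma msupp_prod_poly_in_var (T : 'I_n -> {poly R}) (s : seq 'I_n) m :
  m \in msupp (\prod_(j <- s) poly_in_var j (T j)) ->
  (m <= \sum_(j <- s) U_(j) *+ (size (T j)).-1)%MM.
Proof.
elim: s m => [|j s IH] m.
  by rewrite !big_nil msupp1 inE => /eqP ->; apply/forallP => i; rewrite mnm0E.
rewrite !big_cons => /msuppM_le /allpairsP [[m1 m2] /= [h1 /IH /forallP h2 ->]].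
apply/forallP => i; rewrite !mnmDE leq_add //.
have [k kT ->] := msupp_poly_in_var h1.
by rewrite !mulmnE leq_mul2l -ltnS prednK ?kT ?orbT // (leq_ltn_trans _ kT).
Qed.

End PolyInVar.

Lemma mprec_lt (n : nat) (a b : 'X_{1..n}) : mprec b a -> exists j, (b j < a j)%N.
Proof.
move=> h; apply/existsP; apply: contraLR h => /existsPn hb.
have ge j : (a j <= b j)%N by rewrite leqNgt hb.
have dle : (mdeg a <= mdeg b)%N by rewrite !mdegE; apply: leq_sum => j _.
rewrite /mprec negb_or -leqNgt dle /= negb_and; apply/orP.
have [e|] := eqVneq (mdeg b) (mdeg a); last by left.
right; apply/negP => /existsP [l /andP [lt _]].
suff : (mdeg a < mdeg b)%N by rewrite e ltnn.
rewrite !mdegE (bigD1 l) //= [X in (_ < X)%N](bigD1 l) //= -addSn leq_add //.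
by apply: leq_sum => j _.
Qed.

Lemma ltm_mprec (n : nat) (a b : 'X_{1..n}) : (b < a)%MM -> mprec b a.
Proof.
case/andP=> ne /forallP hb; apply/orP; left.
have [i ni] : exists i, b i != a i.
  apply/existsP; apply: contraR ne => /existsPn h; apply/eqP/mnmP => i.
  by apply/eqP; move: (h i); rewrite negbK.
rewrite !mdegE (bigD1 i) //= [X in (_ < X)%N](bigD1 i) //=.
by rewrite -addSn leq_add ?ltn_neqAle ?ni ?hb //; apply: leq_sum.
Qed.

Lemma Pset_cheb_product (R : realType) (n : nat) (alpha : 'X_{1..n})
    (T : 'I_n -> {poly R[i]}) :
  (forall j, T j \is monic /\ size (T j) = (alpha j).+1) ->
  Pset alpha (cheb_product T).
Proof.
move=> hT.
have alphaE : alpha = (\sum_(j <- index_enum 'I_n) U_(j) *+ (size (T j)).-1)%MM.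
  by rewrite [LHS]multinomUE_id; apply: eq_bigr => j _; case: (hT j) => _ ->.
split.
  have -> : alpha = (\sum_(j <- index_enum 'I_n) mlead (poly_in_var j (T j)))%MM.
    by rewrite alphaE; apply: eq_bigr => j _; case: (mlead_poly_in_var j (proj1 (hT j))).
  by rewrite mleadc_prod; apply: big1 => j _; case: (mlead_poly_in_var j (proj1 (hT j))).
move=> b nb np; apply/eqP; rewrite mcoeff_eq0; apply: contra np => bin.
by apply: ltm_mprec; rewrite /ltm nb alphaE; exact: msupp_prod_poly_in_var.
Qed.

Section WeightRegularization.
Variables (R : realType) (K : set R) (w : R -> R) (M x : R).
Hypotheses (w_ge0 : forall y, K y -> 0 <= w y) (w_le : forall y, K y -> w y <= M).
Hypothesis Kx : K x.

Let window (r : R) := [set w xi | xi in K `&` `](x - r), (x + r)[%classic].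

Definition window_sup (r : R) := sup (window r).

Let window_center r : 0 < r -> window r (w x).
Proof.
move=> r0; exists x => //; split => //=.
by rewrite in_itv /= ltrBlDr !ltrDl r0.
Qed.

Let window_ub r : has_ubound (window r).
Proof. by exists M => _ [y [Ky _] <-]; exact: w_le. Qed.

Lemma window_sup_ge r : 0 < r -> w x <= window_sup r.
Proof. by move=> r0; apply: ub_le_sup (window_ub r) _ (window_center r0). Qed.

Lemma window_sup_le r : 0 < r -> window_sup r <= M.
Proof.
move=> r0; apply: ge_sup; first by exists (w x); exact: window_center.
by move=> _ [y [Ky _] <-]; exact: w_le.
Qed.

Lemma window_sup_nondecreasing :
  {in `]0, +oo[ &, nondecreasing_fun window_sup}.
Proof.
move=> r s; rewrite !in_itv /= !andbT => r0 s0 rs.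
apply: sup_le; last by split; [exists (w x); exact: window_center | exact: window_ub].
  move=> z [y [Ky]]; rewrite /= in_itv /= => /andP [yl yr] <-.
  exists (w y); split => //; exists y => //; split => //=; rewrite in_itv /=.
  by apply/andP; split; lra.
by exists (w x); exact: window_center.
Qed.

Let window_sup_lbound : lbound (window_sup @` `]0, +oo[%classic) 0.
Proof.
move=> z [r]; rewrite /= in_itv /= andbT => r0 <-.
exact: le_trans (w_ge0 Kx) (window_sup_ge r0).
Qed.

Lemma what_window_inf : what K w x = inf (window_sup @` `]0, +oo[%classic).
Proof.
apply: cvg_lim => //; apply: nondecreasing_at_right_cvgr => //.
  exact: window_sup_nondecreasing.
by exists 0; exact: window_sup_lbound.
Qed.

Lemma what_ge0 : 0 <= what K w x.
Proof.
rewrite what_window_inf; apply: lb_le_inf window_sup_lbound.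
by exists (window_sup 1), 1 => //=; rewrite in_itv /= andbT.
Qed.

Lemma what_le : what K w x <= M.
Proof.
rewrite what_window_inf; apply: le_trans (window_sup_le ltr01).
apply: ge_inf; first by exists 0; exact: window_sup_lbound.
by exists 1 => //=; rewrite in_itv /= andbT.
Qed.

End WeightRegularization.

Section ComplexNorm.
Variable R : realType.
Implicit Types (z : R[i]) (t : R).

Lemma normc_normr z : (normc z)%:C = `|z|.
Proof. by case: z. Qed.

Lemma normc_ge0 z : 0 <= normc z.
Proof. by rewrite -lecR normc_normr raddf0 normr_ge0. Qed.

Lemma normc_gt0 z : (0 < normc z) = (z != 0).
Proof. by rewrite -ltcR normc_normr raddf0 normr_gt0. Qed.

Lemma normc_real t : normc t%:C = `|t|.
Proof. by rewrite /= expr0n /= addr0 sqrtr_sqr. Qed.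

Lemma normcX z k : normc (z ^+ k) = normc z ^+ k.
Proof. by apply: complexI; rewrite rmorphXn /= !normc_normr normrX. Qed.

Lemma normc_sum (I : Type) (r : seq I) (F : I -> R[i]) :
  normc (\sum_(i <- r) F i) <= \sum_(i <- r) normc (F i).
Proof.
elim: r => [|i r IH]; first by rewrite !big_nil normc0.
by rewrite !big_cons (le_trans (le_normcD _ _)) // lerD2l.
Qed.

Lemma Re_le_normc z : complex.Re z <= normc z.
Proof.
case: z => a b /=; apply: le_trans (ler_norm a) _.
by rewrite -sqrtr_sqr ler_wsqrtr // lerDl sqr_ge0.
Qed.

End ComplexNorm.

Section RealLinear.
Variables (R : realType) (V : lmodType R[i]).
Implicit Types (f g : V -> R) (u v : V).

Definition real_linear f := {morph f : u v / u + v} /\ forall t u, f (t%:C *: u) = t * f u.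

Definition real_subspace (M : V -> Prop) :=
  [/\ M 0, forall u v, M u -> M v -> M (u + v) & forall t u, M u -> M (t%:C *: u)].

Lemma real_linearN f u : real_linear f -> f (- u) = - f u.
Proof. by case=> _ fZ; rewrite -scaleN1r -(rmorphN1 (real_complex R)) fZ mulN1r. Qed.

Lemma real_linearZ f c u : real_linear f ->
  f (c *: u) = complex.Re c * f u + complex.Im c * f ('i *: u).
Proof. by case=> fD fZ; rewrite {1}[c]complexE scalerDl mulrC -scalerA fD !fZ. Qed.

Lemma real_linear_shift f g v b : real_linear f -> real_linear g ->
  real_linear (fun u => f (u - (g u)%:C *: v) + g u * b).
Proof.
move=> [fD fZ] [gD gZ]; split=> [u w|t u] /=.
  rewrite gD [RHS]addrACA -fD mulrDl; congr (f _ + _).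
  by rewrite rmorphD scalerDl opprD addrACA.
by rewrite gZ rmorphM -scalerA -scalerBr fZ mulrDr mulrA.
Qed.

Definition complexify f u : R[i] := f u +i* - f ('i *: u).

Lemma complexifyD f : real_linear f -> {morph complexify f : u v / u + v}.
Proof. by case=> fD _ u v; rewrite /complexify scalerDr !fD; simpc. Qed.

Lemma complexifyZ f c u : real_linear f -> complexify f (c *: u) = c * complexify f u.
Proof.
move=> fl; rewrite /complexify scalerA !(real_linearZ ('i * c) u fl, real_linearZ c u fl).
by case: c => a b; simpc; congr (_ +i* _); rewrite /=; ring.
Qed.

End RealLinear.

Section Seminorm.
Variables (R : realType) (V : lmodType R[i]) (s : V -> R).
Hypotheses (sD : forall u v, s (u + v) <= s u + s v)
           (sZ : forall c u, s (c *: u) = normc c * s u).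

Lemma seminorm0 : s 0 = 0.
Proof. by rewrite -(scale0r 0) sZ normc0 mul0r. Qed.

Lemma seminorm_ge0 u : 0 <= s u.
Proof.
have := sD u (- u); rewrite subrr seminorm0 -scaleN1r sZ normcN.
by rewrite normc1 mul1r; lra.
Qed.

Lemma seminormZr t u : 0 <= t -> s (t%:C *: u) = t * s u.
Proof. by move=> t0; rewrite sZ normc_real ger0_norm. Qed.

Lemma hahn_banach_slope (M : V -> Prop) (g : V -> R) (v : V) :
  real_subspace M -> real_linear g -> (forall u, M u -> g u <= s u) ->
  exists b, forall u t, M u -> g u + t * b <= s (u + t%:C *: v).
Proof.
move=> [M0 MD MZ] [gD gZ] gs.
(* sup_u (g u - s (u - v)) <= inf_u (s (u + v) - g u), and b := the infimum works. *)
have key u u' : M u -> M u' -> g u' - s (u' - v) <= s (u + v) - g u.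
  move=> Mu Mu'; have := gs _ (MD _ _ Mu Mu'); rewrite gD.
  by have := sD (u + v) (u' - v); rewrite addrACA subrr addr0; lra.
pose A := [set s (u + v) - g u | u in M].
have A0 : A !=set0 by exists (s (0 + v) - g 0), 0.
have Alb : has_lbound A by exists (g 0 - s (0 - v)) => _ [u Mu <-]; exact: key.
have infA_le u : M u -> inf A <= s (u + v) - g u.
  by move=> Mu; apply: ge_inf => //; exists u.
have infA_ge u : M u -> g u - s (u - v) <= inf A.
  by move=> Mu; apply: lb_le_inf => // _ [u' Mu' <-]; exact: key.
exists (inf A) => u t Mu.
have [t0|t0|->] := ltgtP t 0; last by rewrite mul0r addr0 scale0r addr0 gs.
- have nt0 : 0 < - t by rewrite oppr_gt0.
  have tu : u + t%:C *: v = (- t)%:C *: ((- t)^-1%:C *: u - v).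
    by rewrite scalerBr scalerA -rmorphM mulfV ?gt_eqF // scale1r raddfN scaleNr opprK.
  have := ler_wpM2l (ltW nt0) (infA_ge _ (MZ (- t)^-1 _ Mu)).
  rewrite gZ mulrBr mulrA mulfV ?gt_eqF // mul1r tu seminormZr ?(ltW nt0) //; lra.
- have tu : u + t%:C *: v = t%:C *: (t^-1%:C *: u + v).
    by rewrite scalerDr scalerA -rmorphM mulfV ?gt_eqF // scale1r.
  have := ler_wpM2l (ltW t0) (infA_le _ (MZ t^-1 _ Mu)).
  rewrite gZ mulrBr mulrA mulfV ?gt_eqF // mul1r tu seminormZr ?(ltW t0) //; lra.
Qed.

Lemma normc_complexify_le f (M : V -> Prop) u : real_linear f ->
  (forall c u, M u -> M (c *: u)) -> (forall u, M u -> f u <= s u) ->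
  M u -> normc (complexify f u) <= s u.
Proof.
move=> fl MZ fs Mu; set z := complexify f u.
(* Rotating u by the unimodular c makes the value real, equal to normc z. *)
have [->|z0] := eqVneq z 0; first by rewrite normc0; exact: seminorm_ge0.
pose c := `|z| / z.
have cz : complexify f (c *: u) = (normc z)%:C.
  by rewrite complexifyZ // /c mulfVK // normc_normr.
have c1 : normc c = 1.
  by apply: complexI; rewrite normc_normr normf_div normr_id divff // normr_eq0.
have := fs _ (MZ c _ Mu); rewrite sZ c1 mul1r.
by have /(congr1 (@complex.Re R)) /= <- := cz.
Qed.

End Seminorm.

Section PolyRealCoordinates.
Context {R : realType}.
Implicit Types (p q : {poly R[i]}).

(* Real coordinates on {poly R[i]}: the coordinates 2k and 2k+1 are the real and
   imaginary parts of the k-th coefficient; rspan k is the real span of the first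
   k vectors of the dual basis rbasis, so rspan (2 d) is the polynomials of size
   at most d (rspan_size). *)
Definition rcoord k p : R :=
  if odd k then complex.Im p`_k./2 else complex.Re p`_k./2.

Definition rbasis k : {poly R[i]} := (if odd k then 'i else 1) *: 'X^(k./2).

Definition rspan k p := forall m, (k <= m)%N -> rcoord m p = 0.

Lemma rcoord_linear k : real_linear (rcoord k).
Proof.
split=> [p q|t p]; rewrite /rcoord ?coefD ?coefZ; case: odd; case: (p`_k./2) => a b //=.
- by case: (q`_k./2).
- by case: (q`_k./2).
- by rewrite mul0r addr0.
- by rewrite mul0r subr0.
Qed.

Lemma rcoord_rbasis m k : rcoord m (rbasis k) = (m == k)%:R.
Proof.
rewrite /rcoord /rbasis coefZ coefXn.
have [e|ne] := eqVneq m./2 k./2; last first.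
  by rewrite mulr0 (_ : (m == k) = false) ?if_same //; apply: contraNF ne => /eqP ->.
have -> : (m == k) = (odd m == odd k).
  apply/eqP/eqP => [-> //|o].
  by rewrite -[m]odd_double_half -[k]odd_double_half o e.
by rewrite mulr1; case: (odd m); case: (odd k).
Qed.

Lemma rspan_subspace k : real_subspace (rspan k).
Proof.
split=> [m _|p q hp hq m km|t p hp m km].
- by rewrite /rcoord coef0; case: odd.
- by rewrite (proj1 (rcoord_linear m)) hp ?hq ?addr0.
- by rewrite (proj2 (rcoord_linear m)) hp ?mulr0.
Qed.

Lemma rspan_le k l p : (k <= l)%N -> rspan k p -> rspan l p.
Proof. by move=> kl hp m lm; apply/hp/(leq_trans kl). Qed.

Lemma rspan_drop k p : rspan k.+1 p -> rspan k (p - (rcoord k p)%:C *: rbasis k).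
Proof.
move=> hp m km; have cl := rcoord_linear m.
rewrite (proj1 cl) real_linearN // (proj2 cl) rcoord_rbasis.
have [-> | mk] := eqVneq m k; first by rewrite mulr1 subrr.
by rewrite mulr0 subr0 hp // ltn_neqAle eq_sym mk.
Qed.

Lemma rspan_size d p : rspan d.*2 p <-> (size p <= d)%N.
Proof.
split=> [hp | hs m dm].
  apply/leq_sizeP => i di; rewrite [p`_i]complexE.
  have := hp i.*2; rewrite /rcoord odd_double doubleK leq_double => /(_ di) ->.
  have -> : complex.Im p`_i = 0.
    have := hp i.*2.+1; rewrite /rcoord /= odd_double uphalf_double; apply.
    by rewrite leqW // leq_double.
  by rewrite mulr0 addr0.
rewrite /rcoord nth_default; first by case: odd.
by apply: leq_trans hs _; rewrite -[d]doubleK half_leq.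
Qed.

End PolyRealCoordinates.

Section DominatedExtension.
Variables (R : realType) (s : {poly R[i]} -> R).
Hypotheses (sD : forall p q, s (p + q) <= s p + s q)
           (sZ : forall c p, s (c *: p) = normc c * s p).
Implicit Types (p q : {poly R[i]}) (f : {poly R[i]} -> R).

Definition dominated k f := real_linear f /\ forall p, rspan k p -> f p <= s p.

Lemma dominated_extend k f : dominated k f ->
  exists2 g, dominated k.+1 g & forall p, rspan k p -> g p = f p.
Proof.
case=> fl fs; have [b hb] := hahn_banach_slope sD sZ (rbasis k) (rspan_subspace k) fl fs.
exists (fun p => f (p - (rcoord k p)%:C *: rbasis k) + rcoord k p * b).
  split; first exact: real_linear_shift (rcoord_linear k).
  by move=> p hp; have := hb _ (rcoord k p) (rspan_drop hp); rewrite subrK.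
by move=> p hp; rewrite hp // mul0r scale0r subr0 addr0.
Qed.

Lemma dominated_extend_iter k m f : dominated k f ->
  exists2 g, dominated (k + m) g & forall p, rspan k p -> g p = f p.
Proof.
move=> hf; elim: m => [|m [g hg gf]]; first by exists f; rewrite ?addn0.
have [h hh hg'] := dominated_extend hg; exists h; first by rewrite addnS.
by move=> p hp; rewrite hg' ?gf //; apply: rspan_le hp; rewrite leq_addr.
Qed.

End DominatedExtension.

Section ChebyshevFunctional.
Variables (R : realType) (s : {poly R[i]} -> R).
Hypotheses (sD : forall p q, s (p + q) <= s p + s q)
           (sZ : forall c p, s (c *: p) = normc c * s p).
Variables (T : {poly R[i]}) (a : nat).
Hypothesis T_min : forall Q, Q \is monic -> size Q = a.+1 -> s T <= s Q.
Implicit Types (p q : {poly R[i]}).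

Lemma cheb_coef_le p : (size p <= a.+1)%N -> normc p`_a * s T <= s p.
Proof.
move=> sp; have [->|pa0] := eqVneq p`_a 0.
  by rewrite normc0 mul0r seminorm_ge0.
have size_p : size p = a.+1.
  by apply/eqP; rewrite eqn_leq sp ltnNge; apply: contra pa0 => /leq_sizeP ->.
have := @T_min ((p`_a)^-1 *: p) _ _; rewrite sZ normcV.
rewrite -ler_pdivlMl ?normc_gt0 // mulrC; apply.
  by apply/monicP; rewrite lead_coefZ lead_coefE size_p mulVf.
by rewrite size_scale ?invr_eq0.
Qed.

Lemma cheb_functional D : (a < D)%N ->
  exists L : {poly R[i]} -> R[i],
    [/\ {morph L : p q / p + q}, forall c p, L (c *: p) = c * L p,
        forall p, (size p <= D)%N -> normc (L p) <= s p,
        forall k, (k < a)%N -> L 'X^k = 0 & L 'X^a = (s T)%:C].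
Proof.
move=> aD; pose f0 p := complex.Re p`_a * s T.
have f0l : real_linear f0.
  split=> [p q|t p]; rewrite /f0.
    by rewrite coefD -mulrDl; case: (p`_a) (q`_a) => ? ? [].
  by rewrite coefZ mulrA; case: (p`_a) => ? ? /=; rewrite mul0r subr0.
have f0s p : rspan a.+1.*2 p -> f0 p <= s p.
  move/rspan_size=> sp; apply: le_trans (cheb_coef_le sp).
  by rewrite ler_wpM2r ?Re_le_normc ?seminorm_ge0.
have [f [fl fs] ff0] := dominated_extend_iter sD sZ (D.*2 - a.+1.*2) (conj f0l f0s).
rewrite subnKC ?leq_double // in fs.
have f0X c k : (k <= a)%N -> f (c *: 'X^k) = if k == a then complex.Re c * s T else 0.
  move=> ka; rewrite ff0 /f0 ?coefZ ?coefXn.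
    by rewrite eq_sym; case: (k == a); rewrite ?mulr1 ?mulr0 ?mul0r.
  by apply/rspan_size; rewrite (leq_trans (size_scale_leq _ _)) // size_polyXn.
exists (complexify f); split.
- exact: complexifyD.
- by move=> c p; apply: complexifyZ.
- move=> p sp; apply: (normc_complexify_le sD sZ fl (M := fun p => (size p <= D)%N)) => //.
    by move=> c q sq; apply: leq_trans (size_scale_leq _ _) sq.
  by move=> q /rspan_size; apply: fs.
- move=> k ka; rewrite /complexify f0X ?(ltnW ka) // -['X^k]scale1r f0X ?(ltnW ka) //.
  by rewrite (ltn_eqF ka) oppr0.
- by rewrite /complexify f0X // -['X^a]scale1r f0X // eqxx /= mul1r mul0r oppr0.
Qed.

End ChebyshevFunctional.

Section WeightedSupNorm.
Variables (R : realType) (K : set R) (w : R -> R) (M B : R).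
Hypotheses (K0 : K !=set0) (KB : forall x, K x -> `|x| <= B).
Hypotheses (w_ge0 : forall x, K x -> 0 <= w x) (w_le : forall x, K x -> w x <= M).
Implicit Types (p q : {poly R[i]}).

Lemma normc_horner_le p x : `|x| <= B ->
  normc p.[x%:C] <= \sum_(i < size p) normc p`_i * B ^+ i.
Proof.
move=> xB; rewrite horner_coef; apply: le_trans (normc_sum _ _) _.
apply: ler_sum => i _; rewrite normcM normcX normc_real.
by rewrite ler_wpM2l ?normc_ge0 // lerXn2r ?nnegrE ?(le_trans _ xB).
Qed.

Lemma wnorm1_ub p : has_ubound [set w x * normc p.[x%:C] | x in K].
Proof.
exists (M * \sum_(i < size p) normc p`_i * B ^+ i) => _ [x Kx <-].
by rewrite ler_pM ?w_ge0 ?normc_ge0 ?w_le ?normc_horner_le ?KB.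
Qed.

Lemma le_wnorm1 p x : K x -> w x * normc p.[x%:C] <= wnorm1 K w p.
Proof. by move=> Kx; apply: ub_le_sup (wnorm1_ub p) _ _; exists x. Qed.

Lemma wnorm1_ge0 p : 0 <= wnorm1 K w p.
Proof.
by case: K0 => x Kx; rewrite (le_trans _ (le_wnorm1 p Kx)) ?mulr_ge0 ?w_ge0 ?normc_ge0.
Qed.

Lemma wnorm1_le p b : (forall x, K x -> w x * normc p.[x%:C] <= b) -> wnorm1 K w p <= b.
Proof.
move=> h; apply: ge_sup => [|_ [x Kx <-]]; last exact: h.
by case: K0 => x Kx; exists (w x * normc p.[x%:C]), x.
Qed.

Lemma wnorm1D p q : wnorm1 K w (p + q) <= wnorm1 K w p + wnorm1 K w q.
Proof.
apply: wnorm1_le => x Kx; rewrite hornerD.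
apply: le_trans (_ : w x * (normc p.[x%:C] + normc q.[x%:C]) <= _).
  by rewrite ler_wpM2l ?w_ge0 ?le_normcD.
by rewrite mulrDr lerD ?le_wnorm1.
Qed.

Let wnorm1Z_le c p : wnorm1 K w (c *: p) <= normc c * wnorm1 K w p.
Proof.
apply: wnorm1_le => x Kx; rewrite hornerZ normcM mulrCA.
by rewrite ler_wpM2l ?normc_ge0 ?le_wnorm1.
Qed.

Lemma wnorm1Z c p : wnorm1 K w (c *: p) = normc c * wnorm1 K w p.
Proof.
apply/eqP; rewrite eq_le wnorm1Z_le /=.
have [->|c0] := eqVneq c 0.
  by rewrite normc0 mul0r wnorm1_ge0.
have := wnorm1Z_le c^-1 (c *: p).
by rewrite scalerA mulVf // scale1r normcV ler_pdivlMl ?normc_gt0.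
Qed.

End WeightedSupNorm.

Section ProductFunctional.
Variables (R : realType) (n : nat) (K : 'I_n -> set R) (w : 'I_n -> R -> R) (M B : 'I_n -> R).
Hypotheses (K0 : forall j, K j !=set0) (KB : forall j x, K j x -> `|x| <= B j).
Hypotheses (w_ge0 : forall j x, K j x -> 0 <= w j x) (w_le : forall j x, K j x -> w j x <= M j).
Let W (x : 'I_n -> R) := \prod_(j < n) w j (x j).
Implicit Types (p q : {poly R[i]}).

Lemma wnormn_ub (P : {mpoly R[i][n]}) :
  has_ubound [set W x * normc (meval (fun j => (x j)%:C) P) | x in Kprod K].
Proof.
exists ((\prod_(j < n) M j) * \sum_(b <- msupp P) normc P@_b * \prod_(j < n) B j ^+ b j).
move=> _ [x Kx <-]; apply: ler_pM.
- by apply: prodr_ge0 => j _; apply: w_ge0.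
- exact: normc_ge0.
- by apply: ler_prod => j _; rewrite w_ge0 ?w_le.
rewrite mevalE; apply: le_trans (normc_sum _ _) _.
apply: ler_sum => b _; rewrite normcM ler_wpM2l ?normc_ge0 //.
elim/big_rec2: _ => [|j y1 y2 _ h]; first by rewrite normc1.
rewrite normcM normcX normc_real.
by rewrite ler_pM ?exprn_ge0 ?normc_ge0 ?lerXn2r ?nnegrE ?KB ?(le_trans _ (KB (Kx j))).
Qed.

Lemma le_wnormn (P : {mpoly R[i][n]}) x : Kprod K x ->
  W x * normc (meval (fun j => (x j)%:C) P) <= wnormn K W P.
Proof. by move=> Kx; apply: ub_le_sup (wnormn_ub P) _ _; exists x. Qed.

Variables (L : 'I_n -> {poly R[i]} -> R[i]) (D : nat).
Hypotheses (LD : forall j, {morph L j : p q / p + q})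
           (LZ : forall j c p, L j (c *: p) = c * L j p)
           (L_le : forall j p, (size p <= D)%N -> normc (L j p) <= wnorm1 (K j) (w j) p).
Variable P : {mpoly R[i][n]}.
Hypothesis size_P : forall b, b \in msupp P -> forall j, (b j < D)%N.

Definition mixed_monomial k (x : 'I_n -> R) (b : 'X_{1..n}) :=
  \prod_(j < n) (if (j < k)%N then L j 'X^(b j) else (x j)%:C ^+ b j).

Definition mixed_eval k x := \sum_(b <- msupp P) P@_b * mixed_monomial k x b.

Definition tail_weight k (x : 'I_n -> R) := \prod_(j < n | (k <= j)%N) w j (x j).

Let upd (x : 'I_n -> R) (i : 'I_n) (t : R) (j : 'I_n) := if j == i then t else x j.

Lemma tail_weight_upd k (i : 'I_n) x t : val i = k ->
  tail_weight k (upd x i t) = w i t * tail_weight k.+1 x.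
Proof.
move=> ik; rewrite /tail_weight (bigD1 i) ?ik //= /upd eqxx; congr (_ * _).
apply: eq_big => j; last by move=> /andP [_ /negbTE ->].
by rewrite -ik ltn_neqAle -val_eqE eq_sym andbC.
Qed.

(* Fixing all variables but x_i, the slice of mixed_eval k.+1 is a univariate
   polynomial q whose image under L_i is mixed_eval k.+1 x and whose values are
   mixed_eval k at the points with x_i moved. *)
Lemma mixed_eval_slice k (i : 'I_n) x : val i = k ->
  exists2 q : {poly R[i]}, (size q <= D)%N &
    mixed_eval k.+1 x = L i q /\ forall t, q.[t%:C] = mixed_eval k (upd x i t).
Proof.
move=> ik.
pose rest b :=
  \prod_(j < n | j != i) (if (j < k)%N then L j 'X^(b j) else (x j)%:C ^+ b j).
have rest_upd t b : \prod_(j < n | j != i)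
    (if (j < k)%N then L j 'X^(b j) else (upd x i t j)%:C ^+ b j) = rest b.
  by apply: eq_bigr => j /negbTE ji; rewrite /upd ji.
exists (\sum_(b <- msupp P) (P@_b * rest b) *: 'X^(b i)).
  rewrite (leq_trans (size_sum _ _ _)) //; apply/bigmax_leqP_seq => b bP _.
  by rewrite (leq_trans (size_scale_leq _ _)) // size_polyXn size_P.
split=> [|t].
  rewrite (big_morph (L i) (LD i) (_ : L i 0 = 0)); last by rewrite -(scale0r 0) LZ mul0r.
  rewrite /mixed_eval; apply: eq_bigr => b _.
  rewrite LZ /mixed_monomial (bigD1 i) //= ik ltnSn.
  rewrite -mulrA [rest b * _]mulrC; congr (_ * (_ * _)); apply: eq_bigr => j ji.
  by rewrite ltnS leq_eqVlt -ik val_eqE (negbTE ji).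
rewrite horner_sum /mixed_eval; apply: eq_bigr => b _.
rewrite hornerZ hornerXn /mixed_monomial (bigD1 i) //= ik ltnn rest_upd.
by rewrite /upd eqxx mulrAC mulrA.
Qed.

Lemma mixed_eval_bound k : (k <= n)%N ->
  forall x, (forall j : 'I_n, (k <= j)%N -> K j (x j)) ->
  tail_weight k x * normc (mixed_eval k x) <= wnormn K W P.
Proof.
elim: k => [|k IH] kn x Kx.
  have -> : tail_weight 0 x = W x by apply: eq_bigl.
  rewrite (_ : mixed_eval 0 x = meval (fun j => (x j)%:C) P).
    by apply: le_wnormn => j; apply: Kx.
  by rewrite mevalE; apply: eq_bigr => b _; congr (_ * _); apply: eq_bigr.
pose i : 'I_n := Ordinal kn.
have [q sq [-> qE]] := mixed_eval_slice x (erefl : val i = k).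
have tw0 : 0 <= tail_weight k.+1 x by apply: prodr_ge0 => j /Kx; apply: w_ge0.
apply: le_trans (ler_wpM2l tw0 (L_le i sq)) _.
rewrite -[X in X * _]ger0_norm // -normc_real.
rewrite -(wnorm1Z (K0 i) (@KB i) (@w_ge0 i) (@w_le i)).
apply: (wnorm1_le (K0 i)) => t Kt.
rewrite hornerZ normcM normc_real ger0_norm // mulrA.
rewrite -tail_weight_upd // qE; apply: IH => [|j kj]; first exact: ltnW.
rewrite /upd; case: eqP => [->|/eqP ji] //; apply: Kx.
by rewrite ltn_neqAle kj andbT; apply: contra ji => /eqP ki; apply/eqP/val_inj.
Qed.

Lemma functional_eval_bound :
  normc (\sum_(b <- msupp P) P@_b * \prod_(j < n) L j 'X^(b j)) <= wnormn K W P.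
Proof.
have := @mixed_eval_bound n (leqnn n) (fun _ => 0).
rewrite /tail_weight big_pred0 => [|j]; last by rewrite leqNgt ltn_ord.
have -> : mixed_eval n (fun=> 0) = \sum_(b <- msupp P) P@_b * \prod_(j < n) L j 'X^(b j).
  by apply: eq_bigr => b _; congr (_ * _); apply: eq_bigr => j _; rewrite ltn_ord.
by rewrite mul1r; apply => j; rewrite leqNgt ltn_ord.
Qed.

End ProductFunctional.

Section ChebyshevProduct.
Variables (R : realType) (n : nat) (K : 'I_n -> set R) (w : 'I_n -> R -> R) (M B : 'I_n -> R).
Hypotheses (K0 : forall j, K j !=set0) (KB : forall j x, K j x -> `|x| <= B j).
Hypotheses (w_ge0 : forall j x, K j x -> 0 <= w j x) (w_le : forall j x, K j x -> w j x <= M j).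
Variables (alpha : 'X_{1..n}) (T : 'I_n -> {poly R[i]}).
Hypothesis T_min : forall j Q, Q \is monic -> size Q = (alpha j).+1 ->
  wnorm1 (K j) (w j) (T j) <= wnorm1 (K j) (w j) Q.
Let W (x : 'I_n -> R) := \prod_(j < n) w j (x j).
Implicit Types (p : {poly R[i]}) (P : {mpoly R[i][n]}).

Lemma wnormn_cheb_product_le :
  wnormn K W (cheb_product T) <= \prod_(j < n) wnorm1 (K j) (w j) (T j).
Proof.
apply: ge_sup => [|_ [x Kx <-]].
  have [x0 Kx0] := choice (fun j => K0 j).
  by exists (W x0 * normc (meval (fun j => (x0 j)%:C) (cheb_product T))), x0.
rewrite /cheb_product rmorph_prod /=.
rewrite (big_morph _ (@normcM R) (normc1 R)).
rewrite /W -big_split /=; apply: ler_prod => j _.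
rewrite meval_poly_in_var mulr_ge0 ?w_ge0 ?normc_ge0 //=.
exact: (le_wnorm1 (@KB j) (@w_ge0 j) (@w_le j)).
Qed.

Lemma prod_wnorm1_le_wnormn P :
  Pset alpha P -> \prod_(j < n) wnorm1 (K j) (w j) (T j) <= wnormn K W P.
Proof.
move=> [P_alpha P_prec]; pose D := msize P.
have size_P b : b \in msupp P -> forall j, (b j < D)%N.
  move=> bP j; apply: leq_ltn_trans (msize_mdeg_lt bP).
  by rewrite mdegE (bigD1 j) //= leq_addr.
have alpha_P : alpha \in msupp P by rewrite mcoeff_msupp P_alpha oner_eq0.
have [L hL] := choice (fun j => cheb_functional
  (wnorm1D (K0 j) (@KB j) (@w_ge0 j) (@w_le j)) (wnorm1Z (K0 j) (@KB j) (@w_ge0 j) (@w_le j))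
  (@T_min j) (size_P _ alpha_P j)).
have LD j : {morph L j : p q / p + q} by case: (hL j).
have LZ j : forall c p, L j (c *: p) = c * L j p by case: (hL j).
have L_le j : forall p, (size p <= D)%N -> normc (L j p) <= wnorm1 (K j) (w j) p.
  by case: (hL j).
have L_lt j : forall k, (k < alpha j)%N -> L j 'X^k = 0 by case: (hL j).
have L_alpha j : L j 'X^(alpha j) = (wnorm1 (K j) (w j) (T j))%:C by case: (hL j).
have := functional_eval_bound K0 KB w_ge0 w_le LD LZ L_le size_P.
(* Only the monomial x^alpha survives: every other b in the support of P
   precedes alpha, so b j < alpha j for some j. *)
rewrite (bigD1_seq alpha) ?msupp_uniq //= P_alpha mul1r.
rewrite (eq_bigr _ (fun j _ => L_alpha j)) -rmorph_prod.
have -> : \sum_(b <- msupp P | b != alpha) P@_b * \prod_(j < n) L j 'X^(b j) = 0.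
  rewrite big_seq_cond; apply: big1 => b /andP [bP b_alpha].
  have [j bj] : exists j, (b j < alpha j)%N.
    apply: mprec_lt; apply/negPn/negP => not_prec.
    by move: bP; rewrite mcoeff_msupp P_prec ?eqxx.
  by rewrite (bigD1 j) //= L_lt // mul0r mulr0.
rewrite addr0 normc_real ger0_norm // prodr_ge0 // => j _.
exact: (wnorm1_ge0 (K0 j) (@KB j) (@w_ge0 j) (@w_le j)).
Qed.

End ChebyshevProduct.

Lemma compact_norm_bound (R : realType) (A : set R) :
  compact A -> exists B, forall x, A x -> `|x| <= B.
Proof.
move=> /compact_bounded [B [_ hB]].
by exists (B + 1) => x Ax; apply: (hB (B + 1)) => //; rewrite ltrDl.
Qed.

Lemma nonpolar_neq0 (R : realType) (A : set R) : nonpolar A -> A !=set0.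
Proof.
case=> mu [muA _]; apply/set0P/eqP => A0; move: muA.
by rewrite /prob_on A0 setC0 probability_setT => /eqP; rewrite eqe oner_eq0.
Qed.

Theorem mainTheorem12 (R : realType) (n : nat) (K : 'I_n -> set R)
    (w : 'I_n -> R -> R) (alpha : mpoly.multinom n)
    (T : 'I_n -> {poly R[i]}) :
  (forall j, compact (K j)) ->
  (forall j, nonpolar (K j)) ->
  (forall j x, K j x -> 0 <= w j x) ->
  (forall j, exists M : R, forall x, K j x -> w j x <= M) ->
  (forall j, measurable_fun (K j) (w j)) ->
  (forall j, exists muK : probability R R,
      equilibrium_measure (K j) muK /\ (0 < S_weight (K j) (w j) muK)%E) ->
  (forall j, T j \is monic /\ size (T j) = (tnth (mpoly.multinom_val alpha) j).+1 /\
     forall Q : {poly R[i]}, Q \is monic -> size Q = (tnth (mpoly.multinom_val alpha) j).+1 ->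
       wnorm1 (K j) (what (K j) (w j)) (T j)
         <= wnorm1 (K j) (what (K j) (w j)) Q) ->
  let W := fun x : 'I_n -> R => \prod_(j < n) what (K j) (w j) (x j) in
  let Q := cheb_product T in
  Pset alpha Q /\
  wnormn K W Q = inf [set wnormn K W P | P in Pset alpha].
Proof.
move=> K_compact K_nonpolar w_ge0 w_bounded _ _ hT W Q.
have K0 j := nonpolar_neq0 (K_nonpolar j).
have [B KB] := choice (fun j => compact_norm_bound (K_compact j)).
have [M w_le] := choice w_bounded.
have wh_ge0 j x : K j x -> 0 <= what (K j) (w j) x := what_ge0 (@w_ge0 j) (@w_le j).
have wh_le j x : K j x -> what (K j) (w j) x <= M j := what_le (@w_ge0 j) (@w_le j).
have T_min j := proj2 (proj2 (hT j)).
have lower P : Pset alpha P -> wnormn K W Q <= wnormn K W P.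
  move=> PP; apply: le_trans (wnormn_cheb_product_le K0 KB wh_ge0 wh_le T) _.
  exact: (prod_wnorm1_le_wnormn K0 KB wh_ge0 wh_le (alpha := alpha) T_min PP).
have QP : Pset alpha Q by apply: Pset_cheb_product => j; case: (hT j) => ? [].
split=> //; apply/eqP; rewrite eq_le; apply/andP; split.
  by apply: lb_le_inf; [exists (wnormn K W Q), Q | move=> _ [P PP <-]; exact: lower].
by apply: ge_inf; [exists (wnormn K W Q) => _ [P PP <-]; exact: lower | exists Q].
Qed.
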